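(* Let $S=\Sigma^*$ be the free monoid over an alphabet $\Sigma$. Then: (1) $[1,1]=\rho_1$; (2) $[1,[1,1]]=0$ (so $S$ is left $2$-nilpotent); (3) if $|\Sigma|\le2$, then $\rho_2=[[1,1],1]=[1,1,1]$ and $\rho_2$ is cancellative; if $|\Sigma|\ge3$, then $\rho_2$ is not cancellative; (4) $S$ is right nilpotent if and only if $|\Sigma|\le1$.
   Context: $q_1(x,y,z)=xy$, $q_{k+1}(x,y,z)=q_k(x,y,z)\,z_k\,q_k(y,x,z)$ for $z=(z_1,z_2,\dots)$; $\rho_n$ is the congruence of $S$ generated by all pairs $(q_n(x,y,z),q_n(y,x,z))$ with $x,y\in S$, $z\in S^{\mathbb N}$ (so $\rho_1$ is generated by $(xy,yx)$, $\rho_2$ by $(xyz_1yx,yxz_1xy)$). A congruence $\sigma$ is cancellative if $S/\sigma$ is cancellative. Commutators are those of the semigroup $(S,\cdot)$: for congruences $\alpha_1,\dots,\alpha_k$, $M(\alpha_1,\dots,\alpha_k)$ is the subsemigroup of $S^{\{0,1\}^k}$ generated by all $g$ such that for some $i$ and $(a,b)\in\alpha_i$, $g(x)=a$ if $x_i=0$ and $g(x)=b$ if $x_i=1$; $[\alpha_1,\dots,\alpha_k]$ is the smallest congruence $\delta$ such that for all $f\in M(\alpha_1,\dots,\alpha_k)$: if $(f(x0),f(x1))\in\delta$ for all $x\in\{0,1\}^{k-1}\setminus\{(1,\dots,1)\}$ then $(f(1,\dots,1,0),f(1,\dots,1,1))\in\delta$. $1$ is the total and $0$ the trivial congruence; $[1)^1=1$,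 $[1)^{j+1}=[[1)^j,1]$; $S$ is right nilpotent if $[1)^{d+1}=0$ for some $d\in\mathbb N$. *)

From mathcomp Require Import all_boot.
Set Implicit Arguments. Unset Strict Implicit. Unset Printing Implicit Defensive.

Definition prel (T : Type) := T -> T -> Prop.

Definition releq T (a b : prel T) : Prop := forall x y, a x y <-> b x y.

Section Semigroup.
Variables (T : Type) (op : T -> T -> T).

Definition congruence (r : prel T) : Prop :=
  [/\ (forall x, r x x), (forall x y, r x y -> r y x),
      (forall x y z, r x y -> r y z -> r x z) &
      (forall x y u v, r x y -> r u v -> r (op x u) (op y v))].

Definition cong_gen (R : prel T) : prel T :=
  fun x y => forall th, congruence th -> (forall a b, R a b -> th a b) -> th x y.

Definition total_cong : prel T := fun _ _ => True.
Definition triv_cong : prel T := fun x y => x = y.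

(* S/sigma is cancellative (left and right) *)
Definition cancellative (s : prel T) : Prop :=
  (forall x y z, s (op x z) (op y z) -> s x y) /\
  (forall x y z, s (op z x) (op z y) -> s x y).

(* M(alpha_1, ..., alpha_k): subsemigroup of T^({0,1}^k) generated by the
   generators; {0,1}^k is represented by functions 'I_k -> bool. *)
Inductive inM (k : nat) (als : 'I_k -> prel T) : (('I_k -> bool) -> T) -> Prop :=
  | inM_gen (i : 'I_k) (a b : T) :
      als i a b -> inM als (fun x => if x i then b else a)
  | inM_mul (f g : ('I_k -> bool) -> T) :
      inM als f -> inM als g -> inM als (fun x => op (f x) (g x)).

(* (x, b) : the tuple in {0,1}^(n+1) whose first n coordinates are x and last is b *)
Definition ext (n : nat) (x : 'I_n -> bool) (b : bool) : 'I_n.+1 -> bool :=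
  fun i => match unlift ord_max i with Some j => x j | None => b end.

Definition comm_closed (n : nat) (als : 'I_n.+1 -> prel T) (d : prel T) : Prop :=
  forall f, inM als f ->
    (forall x : 'I_n -> bool, (exists j, x j = false) ->
        d (f (ext x false)) (f (ext x true))) ->
    d (f (ext (fun _ => true) false)) (f (ext (fun _ => true) true)).

(* [alpha_1, ..., alpha_(n+1)]: the smallest congruence with the property *)
Definition commutator (n : nat) (als : 'I_n.+1 -> prel T) : prel T :=
  fun x y => forall d, congruence d -> comm_closed als d -> d x y.

Definition comm2 (a b : prel T) : prel T :=
  @commutator 1 (fun i => nth a [:: a; b] i).

Definition comm3 (a b c : prel T) : prel T :=
  @commutator 2 (fun i => nth a [:: a; b; c] i).

(* q_{n+1}(x,y,z) *)
Fixpoint qq (n : nat) (x y : T) (z : nat -> T) : T :=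
  match n with
  | 0 => op x y
  | n'.+1 => op (op (qq n' x y z) (z n)) (qq n' y x z)
  end.

(* rho_n for n >= 1 *)
Definition rho (n : nat) : prel T :=
  cong_gen (fun a b => exists x y (z : nat -> T),
               a = qq n.-1 x y z /\ b = qq n.-1 y x z).

(* rpow j = [1)^(j+1) *)
Fixpoint rpow (j : nat) : prel T :=
  match j with
  | 0 => total_cong
  | j'.+1 => comm2 (rpow j') total_cong
  end.

Definition right_nilpotent : Prop := exists d : nat, releq (rpow d) triv_cong.

End Semigroup.

Definition card_le (A : Type) (n : nat) : Prop := exists f : A -> 'I_n, injective f.
Definition card_ge (A : Type) (n : nat) : Prop := exists f : 'I_n -> A, injective f.

From mathcomp Require Import all_boot zify.
From Stdlib Require Import Permutation Lia Classical ClassicalEpsilon FunctionalExtensionality.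
Set Implicit Arguments. Unset Strict Implicit. Unset Printing Implicit Defensive.

(* An element of M(α, β) in the free monoid is a concatenation of generators,
   so up to permutation it splits into a word depending only on the first
   coordinate followed by one depending only on the second.  Hence [α, β]
   relates permutations only; as (xy, yx) ∈ [1,1] and permutations are exactly
   rho_1, [1,1] = rho_1.  Since [1,1] preserves length, cancelling generators
   one at a time gives [1,[1,1]] = 0, and over one letter already [1,1] = 0;
   over two letters a ≠ b, if (u, v) is a nontrivial pair of [1)^d of equal
   lengths then (vu, uv) is one of [1)^(d+1).

   Over at most two letters a, b a word has a statistic: its numbers of a's
   and b's and its number of inversions (pairs b...a).  The statistic of a
   product is that of the factors plus a product term, so on an element of
   M(1,1,1) it is a sum of functions of two of the three cube coordinates,
   and on an element of M([1,1],1) one of functions of a single coordinate;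
   this forces [1,1,1] and [[1,1],1] to preserve it.  Conversely, words with
   the same statistic are connected by the rho_2-moves b a z a b ~ a b z b a,
   so rho_2 = [[1,1],1] = [1,1,1], which is cancellative as the statistic is.

   Over three letters abbccab.b rho_2 bcaabbc.b, while the rho_2-class of
   abbccab is a singleton: swapping any factor x y z y x of it to y x z x y
   leaves it unchanged. *)

Section Congruences.
Variables (T : Type) (op : T -> T -> T).

Lemma congruence_meet (P : prel T -> Prop) :
  congruence op (fun x y => forall d, congruence op d -> P d -> d x y).
Proof.
split=> [x d [Hr _ _ _] _ | x y Hxy d Hd HP | x y z Hxy Hyz d Hd HP
        | x y u v Hxy Huv d Hd HP] //; case: (Hd) => _ Hs Ht Hm.
- exact: Hs (Hxy _ Hd HP).
- exact: Ht (Hxy _ Hd HP) (Hyz _ Hd HP).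
- exact: Hm (Hxy _ Hd HP) (Huv _ Hd HP).
Qed.

Lemma congruence_cong_gen (R : prel T) : congruence op (cong_gen op R).
Proof. exact: congruence_meet. Qed.

Lemma cong_gen_min (R th : prel T) :
  congruence op th -> (forall a b, R a b -> th a b) ->
  forall x y, cong_gen op R x y -> th x y.
Proof. by move=> Hth HR x y; apply. Qed.

Lemma cong_gen_sub (R : prel T) a b : R a b -> cong_gen op R a b.
Proof. by move=> Hab th _; apply. Qed.

Lemma congruence_commutator n (als : 'I_n.+1 -> prel T) :
  congruence op (commutator op als).
Proof. exact: congruence_meet. Qed.

Lemma commutator_min n (als : 'I_n.+1 -> prel T) d :
  congruence op d -> comm_closed op als d ->
  forall x y, commutator op als x y -> d x y.
Proof. by move=> Hd Hc x y; apply. Qed.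

Lemma commutator_refl n (als : 'I_n.+1 -> prel T) x : commutator op als x x.
Proof. by case: (congruence_commutator als). Qed.

End Congruences.

Lemma congruence_rho (S : Type) n : congruence cat (rho (@cat S) n).
Proof. exact: congruence_cong_gen. Qed.

Definition c0 : 'I_2 := lift ord_max ord0.
Definition c1 : 'I_2 := ord_max.
Definition e0 : 'I_3 := lift ord_max c0.
Definition e1 : 'I_3 := lift ord_max c1.
Definition e2 : 'I_3 := ord_max.

(* The points (p, q) of {0,1}^2 and (p, q, r) of {0,1}^3 in the encoding of
   [ext]; the last coordinate is the one compared in [comm_closed]. *)
Definition pt2 (p q : bool) : 'I_2 -> bool := ext (fun _ => p) q.
Definition pt3 (p q r : bool) : 'I_3 -> bool := ext (pt2 p q) r.

Lemma ext_lift n (x : 'I_n -> bool) b j : ext x b (lift ord_max j) = x j.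
Proof. by rewrite /ext liftK. Qed.

Lemma ext_max n (x : 'I_n -> bool) b : ext x b ord_max = b.
Proof. by rewrite /ext unlift_none. Qed.

Lemma pt2_c0 p q : pt2 p q c0 = p. Proof. exact: ext_lift. Qed.
Lemma pt2_c1 p q : pt2 p q c1 = q. Proof. exact: ext_max. Qed.
Lemma pt3_e0 p q r : pt3 p q r e0 = p. Proof. by rewrite /pt3 ext_lift pt2_c0. Qed.
Lemma pt3_e1 p q r : pt3 p q r e1 = q. Proof. by rewrite /pt3 ext_lift pt2_c1. Qed.
Lemma pt3_e2 p q r : pt3 p q r e2 = r. Proof. exact: ext_max. Qed.

Lemma ord2P (i : 'I_2) : i = c0 \/ i = c1.
Proof.
case: (unliftP ord_max i) => [j ->|->]; last by right.
by left; rewrite (ord1 j).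
Qed.

Lemma ord3P (i : 'I_3) : [\/ i = e0, i = e1 | i = e2].
Proof.
case: (unliftP ord_max i) => [j ->|->]; last by constructor 3.
by case: (ord2P j) => ->; [constructor 1|constructor 2].
Qed.

Lemma fun_ord1 (x : 'I_1 -> bool) : x = fun _ => x ord0.
Proof. by apply: functional_extensionality => j; rewrite (ord1 j). Qed.

Lemma fun_ord2 (x : 'I_2 -> bool) : x = pt2 (x c0) (x c1).
Proof.
by apply: functional_extensionality => j; case: (ord2P j) => ->;
  rewrite ?pt2_c0 ?pt2_c1.
Qed.

Lemma pt2_true : (fun _ => true) = pt2 true true.
Proof. exact: fun_ord2. Qed.

Section Cubes.
Variables (T : Type) (op : T -> T -> T).

Lemma comm_closed_square (als : 'I_2 -> prel T) d :
  (forall f, inM op als f ->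
     d (f (pt2 false false)) (f (pt2 false true)) ->
     d (f (pt2 true false)) (f (pt2 true true))) ->
  comm_closed op als d.
Proof. by move=> H f Hf Hx; apply/H/(Hx (fun _ => false))=> //; exists ord0. Qed.

Lemma comm_closed_cube (als : 'I_3 -> prel T) d :
  (forall f, inM op als f ->
     d (f (pt3 false false false)) (f (pt3 false false true)) ->
     d (f (pt3 false true false)) (f (pt3 false true true)) ->
     d (f (pt3 true false false)) (f (pt3 true false true)) ->
     d (f (pt3 true true false)) (f (pt3 true true true))) ->
  comm_closed op als d.
Proof.
move=> H f Hf Hx; rewrite pt2_true.
by apply: (H _ Hf); apply: Hx; [exists c0 | exists c0 | exists c1];
  rewrite ?pt2_c0 ?pt2_c1.
Qed.

Lemma commutator_square (als : 'I_2 -> prel T) f :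
  inM op als f -> f (pt2 false false) = f (pt2 false true) ->
  commutator op als (f (pt2 true false)) (f (pt2 true true)).
Proof.
move=> Hf E d [Hr _ _ _] Hc; apply: (Hc _ Hf) => x [j].
by rewrite [x]fun_ord1 => ->; rewrite E.
Qed.

Lemma commutator_cube (als : 'I_3 -> prel T) f :
  inM op als f ->
  f (pt3 false false false) = f (pt3 false false true) ->
  f (pt3 false true false) = f (pt3 false true true) ->
  f (pt3 true false false) = f (pt3 true false true) ->
  commutator op als (f (pt3 true true false)) (f (pt3 true true true)).
Proof.
move=> Hf E00 E01 E10 d [Hr _ _ _] Hc.
move: (Hc _ Hf); rewrite pt2_true; apply=> x [j].
rewrite [x]fun_ord2; case: (ord2P j) => ->; rewrite ?pt2_c0 ?pt2_c1 => ->;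
  by case: (x _); rewrite ?E00 ?E01 ?E10.
Qed.

End Cubes.

Section Words.
Variable S : Type.
Local Notation word := (seq S).

(* A generator of M(α_1, ..., α_k) with (a, b) ∈ α_i is recorded as (i, (a, b)). *)
Definition gen_at k (y : 'I_k -> bool) (g : 'I_k * (word * word)) : word :=
  if y g.1 then g.2.2 else g.2.1.

Definition gens_word k (L : seq ('I_k * (word * word))) (y : 'I_k -> bool) : word :=
  flatten [seq gen_at y g | g <- L].

Definition gens_in k (als : 'I_k -> prel word) (L : seq ('I_k * (word * word))) :=
  List.Forall (fun g => als g.1 g.2.1 g.2.2) L.

Lemma gens_word_cons k g (L : seq ('I_k * (word * word))) y :
  gens_word (g :: L) y = gen_at y g ++ gens_word L y.
Proof. by []. Qed.

Lemma inM_gens_word k (als : 'I_k -> prel word) g L :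
  gens_in als (g :: L) -> inM cat als (gens_word (g :: L)).
Proof.
elim: L g => [|g' L IH] g /List.Forall_cons_iff [Hg HL].
  have -> : gens_word [:: g] = fun y => if y g.1 then g.2.2 else g.2.1.
    by apply: functional_extensionality => y; rewrite /gens_word /= cats0.
  exact: inM_gen.
exact: (inM_mul (inM_gen cat Hg) (IH _ HL)).
Qed.

Lemma inM_gens k (als : 'I_k -> prel word) f :
  inM cat als f -> exists L, gens_in als L /\ f = gens_word L.
Proof.
elim=> [i a b Hab | f1 f2 _ [L1 [H1 ->]] _ [L2 [H2 ->]]].
  exists [:: (i, (a, b))]; split; first by constructor.
  by apply: functional_extensionality => y; rewrite /gens_word /= cats0.
exists (L1 ++ L2); split; first by apply/List.Forall_app.
by apply: functional_extensionality => y; rewrite /gens_word map_cat flatten_cat.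
Qed.

End Words.

Section Abelianisation.
Variable S : Type.
Local Notation word := (seq S).
Local Notation total := (@total_cong word).

Lemma congruence_perm : congruence cat (@Permutation S).
Proof.
split=> [x | x y | x y z | x y u v].
- exact: Permutation_refl.
- exact: Permutation_sym.
- exact: Permutation_trans.
- exact: Permutation_app.
Qed.

Definition coord_word (L : seq ('I_2 * (word * word))) (i : 'I_2) (p : bool) :=
  gens_word [seq g <- L | g.1 == i] (fun _ => p).

Lemma perm_gens_word L y :
  Permutation (gens_word L y) (coord_word L c0 (y c0) ++ coord_word L c1 (y c1)).
Proof.
elim: L => [|[i ab] L IH] //; rewrite /coord_word gens_word_cons.
case: (ord2P i) => -> /=; rewrite gens_word_cons /gen_at /=.
  by rewrite -catA; apply: Permutation_app_head.
apply: (Permutation_trans (Permutation_app_head _ IH)).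
exact: Permutation_app_swap_app.
Qed.

Lemma perm_comm_closed (als : 'I_2 -> prel word) :
  comm_closed cat als (@Permutation S).
Proof.
apply: comm_closed_square => _ /inM_gens [L [_ ->]] H00.
have P00 := perm_gens_word L (pt2 false false).
have P01 := perm_gens_word L (pt2 false true).
have P10 := perm_gens_word L (pt2 true false).
have P11 := perm_gens_word L (pt2 true true).
rewrite !pt2_c0 !pt2_c1 in P00 P01 P10 P11.
have H1 : Permutation (coord_word L c1 false) (coord_word L c1 true).
  apply: (Permutation_app_inv_l (coord_word L c0 false)).
  by apply: (Permutation_trans (Permutation_sym P00)); apply: Permutation_trans H00 P01.
apply: (Permutation_trans P10); apply: (Permutation_trans _ (Permutation_sym P11)).
exact: Permutation_app_head.
Qed.

Lemma comm2_perm (a b : prel word) u v : comm2 cat a b u v -> Permutation u v.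
Proof. by apply: commutator_min; [exact: congruence_perm | exact: perm_comm_closed]. Qed.

Lemma comm2_total_conj (a : prel word) u v t t' :
  a u v -> u ++ t' = t ++ u -> comm2 cat a total (v ++ t') (t ++ v).
Proof.
move=> Huv E.
have HL : gens_in (fun i : 'I_2 => nth a [:: a; total] i)
  [:: (c1, ([::], t)); (c0, (u, v)); (c1, (t', [::]))] by repeat constructor.
have := commutator_square (inM_gens_word HL).
by rewrite /gens_word /gen_at /= !pt2_c0 !pt2_c1 /= !cats0; apply.
Qed.

Lemma perm_rho1 u v : Permutation u v -> rho (@cat S) 1 u v.
Proof.
have [Hr _ Ht Hm] := @congruence_rho S 1.
elim=> [|x l l' _ IH|x y l|l l' l'' _ IH1 _ IH2].
- exact: Hr.
- exact: (Hm [:: x] [:: x] l l').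
- apply: (Hm [:: y; x] [:: x; y] l l) => //.
  by apply: cong_gen_sub; exists [:: y], [:: x], (fun _ => [::]).
- exact: Ht IH1 IH2.
Qed.

Lemma comm11_rho1 : releq (comm2 (@cat S) total total) (rho (@cat S) 1).
Proof.
move=> u v; split; first by move/comm2_perm; apply: perm_rho1.
apply: cong_gen_min; first exact: congruence_commutator.
move=> _ _ [x [y [z [-> ->]]]].
exact: (comm2_total_conj (u := y) (v := x)).
Qed.

Lemma cat_inj_size (s1 s2 t1 t2 : word) :
  size s1 = size s2 -> s1 ++ t1 = s2 ++ t2 -> s1 = s2 /\ t1 = t2.
Proof.
move=> Hs E; split.
  by have := congr1 (take (size s1)) E; rewrite take_size_cat // Hs take_size_cat.
by have := congr1 (drop (size s1)) E; rewrite drop_size_cat // Hs drop_size_cat.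
Qed.

Lemma comm2_eq_size (a b : prel word) :
  (forall u v, b u v -> size u = size v) -> releq (comm2 cat a b) (@triv_cong word).
Proof.
move=> Hb u v; split; last by move=> ->; apply: commutator_refl.
apply: commutator_min; first by split=> [|x y ->|x y z -> ->|x y u' v' -> ->].
apply: comm_closed_square => _ /inM_gens [L [HL ->]].
elim: L HL => [|[i [s t]] L IH] //= /List.Forall_cons_iff [/= Hst HL].
rewrite !gens_word_cons /gen_at /=.
case: (ord2P i) => Ei; rewrite Ei ?pt2_c0 ?pt2_c1 => E.
  by case: (cat_inj_size (erefl _) E) => _ /(IH HL) ->.
rewrite Ei in Hst; have Hsize : size s = size t by apply: Hb.
by case: (cat_inj_size Hsize E) => -> /(IH HL) ->.
Qed.

End Abelianisation.

Section RightNilpotency.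
Variable S : Type.
Local Notation word := (seq S).

Lemma rpow_nontrivial (a b : S) : a <> b ->
  forall d, exists u v : word, [/\ size u = size v, u <> v & rpow cat d u v].
Proof.
move=> ab; elim=> [|d [u [v [Hs Huv Hd]]]]; first by exists [:: a], [:: b]; split=> // -[].
exists (v ++ u), (u ++ v); split.
- by rewrite !size_cat addnC.
- by case/(cat_inj_size (esym Hs)) => E _; apply: Huv.
- exact: comm2_total_conj Hd erefl.
Qed.

Lemma right_nilpotent_cat : right_nilpotent (@cat S) <-> card_le S 1.
Proof.
split=> [[d Hd] | [f f_inj]].
  case: (classic (exists a b : S, a <> b)) => [[a [b /rpow_nontrivial]] | all_eq].
    by case/(_ d)=> u [v [_ Huv /Hd]].
  exists (fun _ => ord0) => a b _; apply: NNPP => ab; apply: all_eq.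
  by exists a, b.
have all_eq (a b : S) : a = b by apply: f_inj; rewrite (ord1 (f a)) (ord1 (f b)).
exists 1 => u v; split=> [/comm2_perm/Permutation_length | ->]; last first.
  exact: commutator_refl.
elim: u v => [|a u IH] [|b v] //= [/IH ->]; congr cons; exact: all_eq.
Qed.

End RightNilpotency.

Lemma rho2_swap (S : Type) (p x y z q s t : seq S) :
  s = p ++ (x ++ y ++ z ++ y ++ x) ++ q -> t = p ++ (y ++ x ++ z ++ x ++ y) ++ q ->
  rho cat 2 s t.
Proof.
move=> -> ->; have [Hr _ _ Hm] := @congruence_rho S 2.
apply: (Hm _ _ _ _ (Hr p)); apply: (Hm _ _ _ _ ^~ (Hr q)); apply: cong_gen_sub.
by exists x, y, (fun _ => z); rewrite /= -!catA.
Qed.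

Lemma map_qq (S S' : Type) (g : S -> S') n x y (z : nat -> seq S) :
  map g (qq cat n x y z) = qq cat n (map g x) (map g y) (map g \o z).
Proof. by elim: n x y => //= [|n IH] x y; rewrite !map_cat ?IH. Qed.

Lemma rho_map (S S' : Type) (g : S -> S') n u v :
  rho cat n u v -> rho cat n (map g u) (map g v).
Proof.
apply: (cong_gen_min (th := fun u v => rho cat n (map g u) (map g v)))
  => [|_ _ [x [y [z [-> ->]]]]].
  have [Hr Hs Ht Hm] := @congruence_rho S' n.
  split=> [x | x y | x y z | x y u' v' Hxy Huv]; [exact: Hr | exact: Hs | exact: Ht |].
  by rewrite !map_cat; apply: Hm.
by rewrite !map_qq; apply: cong_gen_sub; exists (map g x), (map g y), (map g \o z).
Qed.

Section SyntacticCongruence.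
Variable T : eqType.
Implicit Types w s t : seq T.

Definition syntactic w s t := forall p q, (p ++ s ++ q == w) = (p ++ t ++ q == w).

Lemma congruence_syntactic w : congruence cat (syntactic w).
Proof.
split=> [s p q | s t E p q | s t u E1 E2 p q | s t u v E1 E2 p q] //.
- by rewrite E1 E2.
- by rewrite -catA (E1 p (u ++ q)) catA (E2 (p ++ t) q) -!catA.
Qed.

(* Brute force over all factorisations of w: every factor x y z y x may be
   replaced by y x z x y without leaving w. *)
Definition swap_stable w : bool :=
  let n := (size w).+1 in
  all (fun i => all (fun lx => all (fun ly => all (fun lz =>
    let w1 := drop i w in let x := take lx w1 in
    let w2 := drop lx w1 in let y := take ly w2 in
    let w3 := drop ly w2 in let z := take lz w3 in
    let q := drop lx (drop ly (drop lz w3)) in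
    (take i w ++ x ++ y ++ z ++ y ++ x ++ q != w) ||
    (take i w ++ y ++ x ++ z ++ x ++ y ++ q == w))
    (iota 0 n)) (iota 0 n)) (iota 0 n)) (iota 0 n).

Lemma swap_stableP w : swap_stable w -> forall p x y z q,
  p ++ x ++ y ++ z ++ y ++ x ++ q = w -> p ++ y ++ x ++ z ++ x ++ y ++ q = w.
Proof.
move=> Hw p x y z q E.
have Sw : size w = size p + (size x + (size y + (size z + (size y + (size x + size q))))).
  by rewrite -E !size_cat.
have Hn s : size s <= size w -> size s \in iota 0 (size w).+1.
  by rewrite mem_iota add0n ltnS.
move: Hw => /allP /(_ _ (Hn p ltac:(lia))) /allP /(_ _ (Hn x ltac:(lia)))
  /allP /(_ _ (Hn y ltac:(lia))) /allP /(_ _ (Hn z ltac:(lia))) /=.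
rewrite -E !(take_size_cat, drop_size_cat) // eqxx /=.
by move/eqP.
Qed.

Lemma rho2_syntactic w s t : swap_stable w -> rho cat 2 s t -> syntactic w s t.
Proof.
move=> Hw; apply: cong_gen_min; first exact: congruence_syntactic.
move=> _ _ [x [y [z [-> ->]]]] p q /=; rewrite -!catA.
by apply/eqP/eqP; apply: swap_stableP.
Qed.

End SyntacticCongruence.

Lemma rho2_counterexample :
  rho (@cat nat) 2 ([:: 0; 1; 1; 2; 2; 0; 1] ++ [:: 1]) ([:: 1; 2; 0; 0; 1; 1; 2] ++ [:: 1]) /\
  ~ rho (@cat nat) 2 [:: 0; 1; 1; 2; 2; 0; 1] [:: 1; 2; 0; 0; 1; 1; 2].
Proof.
split=> [|/(rho2_syntactic (w := [:: 0; 1; 1; 2; 2; 0; 1])) H]; last first.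
  by have := H isT [::] [::].
have [_ _ Ht _] := @congruence_rho nat 2.
apply: (Ht _ [:: 2; 0; 1; 1; 0; 1; 1; 2]).
  exact: (@rho2_swap _ [::] [:: 0; 1; 1] [:: 2] [::] [::]).
apply: (Ht _ [:: 2; 1; 0; 0; 1; 1; 1; 2]).
  exact: (@rho2_swap _ [:: 2] [:: 0] [:: 1] [::] [:: 1; 1; 2]).
exact: (@rho2_swap _ [::] [:: 2] [:: 1] [:: 0; 0; 1; 1] [::]).
Qed.

Lemma rho2_not_cancellative (S : Type) : card_ge S 3 -> ~ cancellative cat (rho (@cat S) 2).
Proof.
move=> [f f_inj] [cancel_r _].
pose F (n : nat) : S := f (inord n).
pose g (s : S) : nat := val (epsilon (inhabits ord0) (fun i => f i = s)).
have gF n : n < 3 -> g (F n) = n.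
  move=> lt_n3; rewrite /g /F; set i := epsilon _ _.
  have -> : i = inord n.
    by apply/f_inj/(epsilon_spec _ (fun i => f i = f (inord n))); exists (inord n).
  exact: inordK.
case: rho2_counterexample => /(rho_map F); rewrite !map_cat => /cancel_r /(rho_map g).
by rewrite /= !gF.
Qed.

(* [h] splits the alphabet into letters a ([h] false) and b ([h] true). *)
Section Inversions.
Variables (S : Type) (h : S -> bool).
Local Notation word := (seq S).
Local Notation na := (count (predC h)).
Local Notation nb := (count h).

Fixpoint inversions (w : word) : nat :=
  if w is c :: w' then (if h c then na w' else 0) + inversions w' else 0.

Lemma inversions_cat u v : inversions (u ++ v) = inversions u + inversions v + nb u * na v.
Proof.
elim: u => [|c u IH] /=; first by rewrite addn0.
rewrite IH count_cat; case: (h c) => /=; lia.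
Qed.

Lemma inversions_le u : inversions u <= nb u * na u.
Proof. by elim: u => //= c u IH; case: (h c) => /=; nia. Qed.

Lemma inversions_nseq n c : inversions (nseq n c) = 0.
Proof. by elim: n => //= n ->; case Hc: (h c); rewrite // count_nseq /= Hc. Qed.

Definition ba_equiv u v := [/\ na u = na v, nb u = nb v & inversions u = inversions v].

Lemma congruence_ba_equiv : congruence cat ba_equiv.
Proof.
split=> [u | u v [? ? ?] | u v w [? ? ?] [? ? ?] | x y u v [? ? ?] [? ? ?]] //.
  by split; congruence.
by split; rewrite ?count_cat ?inversions_cat; congruence.
Qed.

Lemma ba_equiv_cancellative : cancellative cat ba_equiv.
Proof.
split=> x y z []; rewrite !count_cat !inversions_cat => Ea Eb Ei;
  have Ea' : na x = na y by lia.
  have Eb' : nb x = nb y by lia.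
  by split=> //; move: Ei; rewrite Eb'; lia.
have Eb' : nb x = nb y by lia.
by split=> //; move: Ei; rewrite Ea'; lia.
Qed.

Lemma ba_equiv_size u v : ba_equiv u v -> size u = size v.
Proof. by case=> Ea Eb _; rewrite -(count_predC h u) -(count_predC h v) Ea Eb. Qed.

Lemma rho2_ba_equiv u v : rho cat 2 u v -> ba_equiv u v.
Proof.
apply: cong_gen_min; first exact: congruence_ba_equiv.
move=> _ _ [x [y [z [-> ->]]]] /=.
by split; rewrite ?count_cat ?inversions_cat ?count_cat; lia.
Qed.

Lemma count_perm (P : pred S) u v : Permutation u v -> count P u = count P v.
Proof. by elim=> //= [x u' v' _ -> | x y w | u' v' w _ -> _ ->] //; lia. Qed.

Definition c0_perm (L : seq ('I_2 * (word * word))) :=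
  List.Forall (fun g => g.1 = c0 -> Permutation g.2.1 g.2.2) L.

Lemma count_gens_word_square (P : pred S) L : c0_perm L ->
  exists Y : bool -> nat, forall y, count P (gens_word L y) = Y (y c1).
Proof.
elim: L => [_|[i [a b]] L IH /List.Forall_cons_iff [/= Hab /IH [Y HY]]].
  by exists (fun _ => 0).
case: (ord2P i) => Ei.
  exists (fun q => count P a + Y q) => y; rewrite gens_word_cons count_cat HY /gen_at Ei.
  by case: (y c0); rewrite // (count_perm P (Hab Ei)).
exists (fun q => count P (if q then b else a) + Y q) => y.
by rewrite gens_word_cons count_cat HY /gen_at Ei.
Qed.

Lemma inversions_gens_word_square L : c0_perm L ->
  exists X Y : bool -> nat, forall y, inversions (gens_word L y) = X (y c0) + Y (y c1).
Proof.
elim: L => [_|[i [a b]] L IH HL]; first by exists (fun _ => 0), (fun _ => 0).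
have /List.Forall_cons_iff [/= Hab HL'] := HL.
have [[X [Y HXY]] [A HA]] := (IH HL', count_gens_word_square (predC h) HL').
pose w p := if p then b else a.
case: (ord2P i) => Ei.
  have Ew p : nb (w p) = nb a by case: p; rewrite /w // (count_perm h (Hab Ei)).
  exists (fun p => inversions (w p) + X p), (fun q => Y q + nb a * A q) => y.
  rewrite gens_word_cons inversions_cat HXY HA /gen_at Ei /= -/(w _) Ew; lia.
exists X, (fun q => inversions (w q) + Y q + nb (w q) * A q) => y.
rewrite gens_word_cons inversions_cat HXY HA /gen_at Ei /= -/(w _); lia.
Qed.

Lemma count_gens_word_cube (P : pred S) (L : seq ('I_3 * (word * word))) :
  exists X Y Z : bool -> nat, forall y,
    count P (gens_word L y) = X (y e0) + Y (y e1) + Z (y e2).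
Proof.
elim: L => [|[i [a b]] L [X [Y [Z IH]]]].
  by exists (fun _ => 0), (fun _ => 0), (fun _ => 0).
pose C p := count P (if p then b else a).
case: (ord3P i) => ->; [exists (fun p => C p + X p), Y, Z
  | exists X, (fun q => C q + Y q), Z | exists X, Y, (fun r => C r + Z r)];
  by move=> y; rewrite gens_word_cons count_cat IH /C /gen_at /=; lia.
Qed.

Lemma inversions_gens_word_cube (L : seq ('I_3 * (word * word))) :
  exists X Y Z : bool -> bool -> nat, forall y,
    inversions (gens_word L y) = X (y e0) (y e1) + Y (y e0) (y e2) + Z (y e1) (y e2).
Proof.
elim: L => [|[i [a b]] L [X [Y [Z IH]]]].
  by exists (fun _ _ => 0), (fun _ _ => 0), (fun _ _ => 0).
have [A [B [C HA]]] := count_gens_word_cube (predC h) L.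
pose I p := inversions (if p then b else a).
pose N p := nb (if p then b else a).
case: (ord3P i) => ->; [exists (fun p q => I p + X p q + N p * A p + N p * B q),
                               (fun p r => Y p r + N p * C r), Z
  | exists (fun p q => X p q + N q * A p + I q + N q * B q), Y,
           (fun q r => Z q r + N q * C r)
  | exists X, (fun p r => Y p r + N r * A p + I r + N r * C r),
              (fun q r => Z q r + N r * B q)];
  by move=> y; rewrite gens_word_cons inversions_cat IH HA /I /N /gen_at /= !mulnDr; lia.
Qed.

Lemma ba_equiv_comm_closed_square (als : 'I_2 -> prel word) :
  (forall u v, als c0 u v -> Permutation u v) -> comm_closed cat als ba_equiv.
Proof.
move=> als0_perm; apply: comm_closed_square => _ /inM_gens [L [HL ->]] [Ea Eb Ei].
have HL' : c0_perm L.
  by apply: List.Forall_impl HL => -[i ab] /= + i0; rewrite i0; apply: als0_perm.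
have [A HA] := count_gens_word_square (predC h) HL'.
have [B HB] := count_gens_word_square h HL'.
have [X [Y HXY]] := inversions_gens_word_square HL'.
rewrite /ba_equiv !HA !HB !HXY !pt2_c0 !pt2_c1 in Ea Eb Ei *.
by split; lia.
Qed.

(* A sum of functions of two of the three coordinates has the same increment
   in the last coordinate at (1,1) as the alternating sum of the increments
   at (0,0), (0,1) and (1,0). *)
Lemma ba_equiv_comm_closed_cube (als : 'I_3 -> prel word) : comm_closed cat als ba_equiv.
Proof.
apply: comm_closed_cube => _ /inM_gens [L [_ ->]] [A1 B1 I1] [A2 B2 I2] [A3 B3 I3].
have [XA [YA [ZA HA]]] := count_gens_word_cube (predC h) L.
have [XB [YB [ZB HB]]] := count_gens_word_cube h L.
have [X [Y [Z HXYZ]]] := inversions_gens_word_cube L.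
rewrite /ba_equiv !HA !HB !HXYZ !pt3_e0 !pt3_e1 !pt3_e2 in A1 B1 I1 A2 B2 I2 A3 B3 I3 *.
by split; lia.
Qed.

End Inversions.

Section BaConnected.
Variables (S : Type) (h : S -> bool).
Hypothesis h_inj : injective h.
Variables (a b : S).
Hypotheses (ha : h a = false) (hb : h b = true).
Local Notation word := (seq S).
Local Notation na := (count (predC h)).
Local Notation nb := (count h).

Lemma letterP c : c = a \/ c = b.
Proof. by case Hc: (h c); [right | left]; apply: h_inj; rewrite Hc. Qed.

Lemma word_first_a v : 0 < na v -> exists s v2, v = nseq s b ++ a :: v2.
Proof.
elim: v => [|c v IH] //=; case: (letterP c) => -> /=; rewrite ?ha ?hb /=.
  by move=> _; exists 0, v.
by case/IH=> s [v2 ->]; exists s.+1, v2.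
Qed.

Lemma factor_ab_or_sorted w :
  (exists p q, w = p ++ a :: b :: q) \/ (exists m n, w = nseq m b ++ nseq n a).
Proof.
elim: w => [|c w [[p [q ->]] | [m [n ->]]]]; first by right; exists 0, 0.
  by left; exists (c :: p), q.
case: (letterP c) => ->; last by right; exists m.+1, n.
by case: m => [|m]; [right; exists 0, n.+1 | left; exists [::], (nseq m b ++ nseq n a)].
Qed.

(* Satisfied by every word ba_equiv-related to a word starting with a. *)
Definition below_max_inversions v := inversions h v + nb v <= nb v * na v.

Lemma sorted_max_inversions s m n :
  ~ below_max_inversions (nseq s.+1 b ++ a :: nseq m b ++ nseq n a).
Proof.
rewrite /below_max_inversions !inversions_cat /= !inversions_cat !inversions_nseq.
rewrite !count_cat /= !count_cat !count_nseq /= ha hb /=; nia.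
Qed.

Lemma rho2_pull_a_step s v2 : below_max_inversions (nseq s.+1 b ++ a :: v2) ->
  exists v2', rho cat 2 (nseq s.+1 b ++ a :: v2) (nseq s b ++ a :: v2').
Proof.
case: (factor_ab_or_sorted v2) => [[p [q ->]] _ | [m [n ->]] /sorted_max_inversions //].
exists (b :: p ++ b :: a :: q).
apply: (@rho2_swap _ (nseq s b) [:: b] [:: a] p q).
  by rewrite -addn1 nseqD -!catA.
by rewrite -!catA.
Qed.

Lemma rho2_pull_a s v2 : below_max_inversions (nseq s.+1 b ++ a :: v2) ->
  exists w, rho cat 2 (nseq s.+1 b ++ a :: v2) (a :: w).
Proof.
have [_ _ Ht _] := @congruence_rho S 2.
elim: s v2 => [|s IH] v2 Hv; have [v2' Hstep] := rho2_pull_a_step Hv.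
  by exists v2'.
have [Ea Eb Ei] := rho2_ba_equiv h Hstep.
have [|w Hw] := IH v2'; first by move: Hv; rewrite /below_max_inversions Ea Eb Ei.
by exists w; apply: Ht Hstep Hw.
Qed.

Lemma rho2_heads_ab n :
  (forall u v, size u <= n -> ba_equiv h u v -> rho cat 2 u v) ->
  forall u1 v1, size u1 <= n -> ba_equiv h (a :: u1) (b :: v1) ->
  rho cat 2 (a :: u1) (b :: v1).
Proof.
have [Hr Hs Ht Hm] := @congruence_rho S 2.
move=> IH u1 v1 Hu1 Huv; have [Ea Eb Ei] := Huv.
have [s [v2 Ev]] : exists s v2, b :: v1 = nseq s.+1 b ++ a :: v2.
  have Hna : 0 < na (b :: v1) by rewrite -Ea /= ha.
  have [[|s] [v2 Ev]] := word_first_a Hna; last by exists s, v2.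
  by case: Ev => ba; move: hb; rewrite ba ha.
have [|w Hw] := @rho2_pull_a s v2.
  rewrite /below_max_inversions -Ev -Ea -Eb -Ei /= ha /= !add0n.
  by rewrite mulnDr muln1 addnC leq_add2l inversions_le.
have Haw : ba_equiv h (a :: u1) (a :: w).
  case: (congruence_ba_equiv h) => _ _ Ht' _; apply: Ht' Huv _.
  by rewrite Ev; apply: rho2_ba_equiv.
apply: Ht (Hm [:: a] [:: a] u1 w (Hr _) _) _.
  exact: IH _ _ Hu1 (proj2 (ba_equiv_cancellative h) _ _ [:: a] Haw).
by rewrite Ev; apply: Hs.
Qed.

End BaConnected.

Lemma ba_equiv_rho2 (S : Type) (h : S -> bool) : injective h ->
  forall u v, ba_equiv h u v -> rho (@cat S) 2 u v.
Proof.
move=> h_inj u v; have [Hr Hs _ Hm] := @congruence_rho S 2.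
elim: (size u) {-2}u v (leqnn (size u)) => [|n IH] [|c u1] [|d v1] //= Hu Huv;
  try by [apply: Hr | move: (ba_equiv_size Huv)].
rewrite ltnS in Hu.
have Hv : size v1 <= n by move: (ba_equiv_size Huv) Hu => /= [<-].
have [Edc | Ndc] := boolP (h d == h c).
  have Edc' : d = c by apply/h_inj/eqP.
  subst d; apply: Hm _ _ _ _ (Hr [:: c]) (IH _ _ Hu _).
  exact: (proj2 (ba_equiv_cancellative h) _ _ [:: c] Huv).
case Hc: (h c) Ndc; case Hd: (h d) => // _.
  apply: (Hs _ _ (rho2_heads_ab h_inj Hd Hc IH Hv _)).
  by case: (congruence_ba_equiv h) => _ Hs' _ _; apply: Hs'.
exact: (rho2_heads_ab h_inj Hc Hd IH Hu Huv).
Qed.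

Section TwoLetters.
Variable S : Type.
Local Notation word := (seq S).
Local Notation total := (@total_cong word).
Local Notation comm11 := (comm2 (@cat S) total total).

Lemma rho2_comm21 u v : rho cat 2 u v -> comm2 cat comm11 total u v.
Proof.
apply: (cong_gen_min (congruence_commutator _ _)) => _ _ [x [y [z [-> ->]]]] /=.
have yx_xy : comm11 (y ++ x) (x ++ y) by apply: (comm2_total_conj (t := x)).
have E : (y ++ x) ++ z 1 ++ y ++ x = (y ++ x ++ z 1) ++ y ++ x by rewrite -!catA.
by have := comm2_total_conj yx_xy E; rewrite -!catA.
Qed.

Lemma rho2_comm111 u v : rho cat 2 u v -> comm3 cat total total total u v.
Proof.
apply: (cong_gen_min (congruence_commutator _ _)) => _ _ [x [y [z [-> ->]]]] /=.
have HL : gens_in (fun i : 'I_3 => nth total [:: total; total; total] i)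
  [:: (e2, ([::], y ++ x ++ z 1)); (e0, (y, [::])); (e1, ([::], x));
      (e0, ([::], y)); (e1, (x, [::])); (e2, (z 1 ++ y ++ x, [::]))].
  by repeat constructor.
have := commutator_cube (inM_gens_word HL).
rewrite /gens_word /gen_at /= !pt3_e0 !pt3_e1 !pt3_e2 /= !cats0 -!catA; exact.
Qed.

Lemma rho2_two_letters : card_le S 2 ->
  [/\ releq (rho cat 2) (comm2 cat comm11 total),
      releq (comm2 cat comm11 total) (comm3 cat total total total) &
      cancellative cat (rho (@cat S) 2)].
Proof.
case=> f f_inj; pose h c := val (f c) == 1.
have h_inj : injective h.
  move=> c d; rewrite /h => Hcd; apply/f_inj/val_inj.
  by case: (f c) (f d) Hcd => [[|[|//]] ?] [[|[|//]] ?].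
have comm21_rho2 u v : comm2 cat comm11 total u v -> rho cat 2 u v.
  move=> Huv; apply: (ba_equiv_rho2 h_inj); move: Huv.
  apply: commutator_min; first exact: congruence_ba_equiv.
  by apply: ba_equiv_comm_closed_square => u' v'; apply: comm2_perm.
split=> [u v | u v |].
- by split; [apply: rho2_comm21 | apply: comm21_rho2].
- split=> [/comm21_rho2 /rho2_comm111 //|].
  move=> Huv; apply: rho2_comm21; apply: (ba_equiv_rho2 h_inj); move: Huv.
  apply: commutator_min; [exact: congruence_ba_equiv | exact: ba_equiv_comm_closed_cube].
- split=> x y z /(rho2_ba_equiv h) H; apply: (ba_equiv_rho2 h_inj).
    exact: (proj1 (ba_equiv_cancellative h) _ _ _ H).
  exact: (proj2 (ba_equiv_cancellative h) _ _ _ H).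
Qed.

End TwoLetters.

Theorem theorem4p8 (Sigma : Type) :
  let op := @cat Sigma in
  let one := @total_cong (seq Sigma) in
  [/\ releq (comm2 op one one) (rho op 1),
      releq (comm2 op one (comm2 op one one)) (@triv_cong (seq Sigma)),
      (card_le Sigma 2 ->
         [/\ releq (rho op 2) (comm2 op (comm2 op one one) one),
             releq (comm2 op (comm2 op one one) one) (comm3 op one one one) &
             cancellative op (rho op 2)]),
      (card_ge Sigma 3 -> ~ cancellative op (rho op 2)) &
      (right_nilpotent op <-> card_le Sigma 1)].
Proof.
split.
- exact: comm11_rho1.
- by apply: comm2_eq_size => u v /comm2_perm /Permutation_length.
- exact: rho2_two_letters.
- exact: rho2_not_cancellative.
- exact: right_nilpotent_cat.
Qed.
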